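(* $\mathfrak{L}(\mathrm{rtNBVA}(2))\not\subseteq\bigcup_k\mathfrak{L}(\mathrm{rtDBVA}(k))$.
   Context: $\mathfrak{L}(A)$ denotes the class of languages recognized by machines of type $A$; the union ranges over $k\ge1$. A real-time deterministic blind vector automaton of dimension $k$ ($\mathrm{rtDBVA}(k)$) is a 6-tuple $(Q,\Sigma,\delta,q_0,Q_a,v)$ with finite state set $Q$, initial state $q_0$, accept states $Q_a$, initial row vector $v\in\mathbb{Q}^k$ (freely chosen), and $\delta:Q\times(\Sigma\cup\{\cent,\$\})\to Q\times S$, $S$ the set of $k\times k$ rational matrices; the input $w$ is read as $\cent w\$$ left to right, one symbol per step, and $\delta(q,\sigma)=(q',M)$ means that in state $q$ reading $\sigma$ the machine goes to $q'$ and multiplies its row vector on the right by $M$. The input is accepted iff after processing $\$$ the state is in $Q_a$ and the first vector entry equals $1$. A real-time nondeterministic blind vector automaton of dimension $k$ ($\mathrm{rtNBVA}(k)$) is defined the same way except that $\delta:Q\times(\Sigma\cup\{\cent,\$\})\to\mathcal{P}(Q\times S)$ (power set), each step choosing one pair from $\delta(q,\sigma)$; an input is accepted iff some computation path ends, after processing $\$$, in a state of $Q_a$ with first vector entry equal to $1$. *)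

From HB Require Import structures.
From mathcomp Require Import all_boot all_order all_algebra.
Set Implicit Arguments. Unset Strict Implicit. Unset Printing Implicit Defensive.
Import GRing.Theory Num.Theory.
Local Open Scope ring_scope.

Inductive tape_sym (Sigma : Type) : Type :=
  | Cent : tape_sym Sigma
  | Dollar : tape_sym Sigma
  | Sym : Sigma -> tape_sym Sigma.
Arguments Cent {Sigma}.
Arguments Dollar {Sigma}.

Definition tape (Sigma : Type) (w : seq Sigma) : seq (tape_sym Sigma) :=
  Cent :: rcons (map (@Sym Sigma) w) Dollar.

(* "the first entry of the vector equals 1" (meaningful for k >= 1) *)
Definition first_entry_is_one (k : nat) (x : 'rV[rat]_k) : Prop :=
  forall i : 'I_k, nat_of_ord i = 0%N -> x 0 i = 1.

Record rtDBVA (Sigma : Type) (k : nat) := MkDBVA {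
  dQ : finType;
  dq0 : dQ;
  dQa : {set dQ};
  dv : 'rV[rat]_k;
  ddelta : dQ -> tape_sym Sigma -> dQ * 'M[rat]_k }.

Definition dstep (Sigma : Type) (k : nat) (M : rtDBVA Sigma k)
  (c : dQ M * 'rV[rat]_k) (a : tape_sym Sigma) : dQ M * 'rV[rat]_k :=
  let t := ddelta c.1 a in (t.1, c.2 *m t.2).

Definition drun (Sigma : Type) (k : nat) (M : rtDBVA Sigma k) (w : seq Sigma)
  : dQ M * 'rV[rat]_k :=
  foldl (dstep (M := M)) (dq0 M, dv M) (tape w).

Definition daccepts (Sigma : Type) (k : nat) (M : rtDBVA Sigma k)
  (w : seq Sigma) : Prop :=
  (drun M w).1 \in dQa M /\ first_entry_is_one (drun M w).2.

Record rtNBVA (Sigma : Type) (k : nat) := MkNBVA {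
  nQ : finType;
  nq0 : nQ;
  nQa : {set nQ};
  nv : 'rV[rat]_k;
  ndelta : nQ -> tape_sym Sigma -> seq (nQ * 'M[rat]_k) }.

Definition nstep (Sigma : Type) (k : nat) (M : rtNBVA Sigma k)
  (cs : seq (nQ M * 'rV[rat]_k)) (a : tape_sym Sigma)
  : seq (nQ M * 'rV[rat]_k) :=
  flatten [seq [seq (p.1, c.2 *m p.2) | p <- ndelta c.1 a] | c <- cs].

Definition nrun (Sigma : Type) (k : nat) (M : rtNBVA Sigma k) (w : seq Sigma)
  : seq (nQ M * 'rV[rat]_k) :=
  foldl (nstep (M := M)) [:: (nq0 M, nv M)] (tape w).

Definition naccepts (Sigma : Type) (k : nat) (M : rtNBVA Sigma k)
  (w : seq Sigma) : Prop :=
  exists2 c, c \in nrun M w & (c.1 \in nQa M /\ first_entry_is_one c.2).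

Definition dlang (Sigma : Type) (k : nat) (M : rtDBVA Sigma k) : seq Sigma -> Prop :=
  fun w => daccepts M w.
Definition nlang (Sigma : Type) (k : nat) (M : rtNBVA Sigma k) : seq Sigma -> Prop :=
  fun w => naccepts M w.

Definition recognizes {Sigma : Type} (A L : seq Sigma -> Prop) : Prop :=
  forall w, A w <-> L w.

From mathcomp Require Import all_boot all_order all_algebra.
From mathcomp Require Import lra.
Set Implicit Arguments. Unset Strict Implicit. Unset Printing Implicit Defensive.
Import GRing.Theory Num.Theory.
Local Open Scope ring_scope.

(* The witness is the language of binary words with unequally many 1s and 0s.
   A two-dimensional nondeterministic machine uses the vector (x, 1) as a
   counter: it guesses which symbol is in the majority and, by skipping some
   occurrences of that symbol, guesses the size of the majority.  Against a
   deterministic machine of dimension k, pigeonhole gives k + 1 prefixes 1^n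
   (distinct n) that reach the same state; their vectors are linearly dependent,
   and the suffixes 0^n contradict any nontrivial dependency. *)

Lemma first_entry_is_oneE k (x : 'rV[rat]_k.+1) : first_entry_is_one x <-> x 0 0 = 1.
Proof.
split=> [/(_ 0 erefl) // | x00 i /= i0].
by have -> : i = 0 by apply: val_inj.
Qed.

Section NondeterministicRun.
Variables (Sigma : Type) (k : nat) (M : rtNBVA Sigma k).

Fixpoint naccepts_from (q : nQ M) (x : 'rV[rat]_k) (s : seq (tape_sym Sigma)) : Prop :=
  if s is a :: s' then exists2 p, p \in ndelta q a & naccepts_from p.1 (x *m p.2) s'
  else q \in nQa M /\ first_entry_is_one x.

Lemma foldl_nstep_accepting cs s :
  (exists2 c, c \in foldl (nstep (M := M)) cs s & c.1 \in nQa M /\ first_entry_is_one c.2)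
  <-> exists2 c, c \in cs & naccepts_from c.1 c.2 s.
Proof.
elim: s cs => [|a s IHs] cs /=; first by [].
rewrite IHs; split.
- by case=> _ /flatten_mapP [c c_cs /mapP [p p_delta ->]] acc; exists c => //; exists p.
- case=> c c_cs [p p_delta acc]; exists (p.1, c.2 *m p.2) => //.
  by apply/flatten_mapP; exists c => //; apply/mapP; exists p.
Qed.

Lemma nacceptsE w : naccepts M w <-> naccepts_from (nq0 M) (nv M) (tape w).
Proof.
rewrite /naccepts /nrun foldl_nstep_accepting.
by split=> [[c]|acc]; [rewrite inE => /eqP -> | exists (nq0 M, nv M); rewrite ?inE].
Qed.

End NondeterministicRun.

Definition counter_row (x : rat) : 'rV[rat]_2 := \row_j (if j == 0 then x else 1).

Definition add_mx (d : rat) : 'M[rat]_2 :=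
  \matrix_(i, j) (if i == j then 1 else if j == 0 then d else 0).

Lemma counter_row_add_mx x d : counter_row x *m add_mx d = counter_row (x + d).
Proof.
apply/rowP => j; rewrite !mxE !big_ord_recl big_ord0 !mxE.
by case: j => -[|[|//]] ?; rewrite /= ?mxE /=; lra.
Qed.

Lemma first_entry_counter_row x : first_entry_is_one (counter_row x) <-> x = 1.
Proof. by rewrite first_entry_is_oneE mxE. Qed.

Definition weight (y : bool) : rat := if y then 1 else -1.

Definition balance (w : seq bool) : rat := (count id w)%:R - (count negb w)%:R.

Lemma balance_cons y w : balance (y :: w) = weight y + balance w.
Proof. by case: y; rewrite /balance /= -?nat1r; lra. Qed.

(* In state [Some b] the machine bets that the balance has the sign of
   [weight b]; it may skip any symbol equal to [b], and the counter,
   started at [1 - weight b], must end at 1. *)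
Definition balance_delta (q : option bool) (a : tape_sym bool) :
    seq (option bool * 'M[rat]_2) :=
  match q, a with
  | None, Cent => [seq (Some b, add_mx (- weight b)) | b <- [:: true; false]]
  | Some b, Sym y =>
      [seq (Some b, add_mx d) | d <- weight y :: (if y == b then [:: 0] else [::])]
  | Some b, Dollar => [:: (Some b, add_mx 0)]
  | _, _ => [::]
  end.

Definition balance_nbva : rtNBVA bool 2 :=
  MkNBVA (None : option bool) [set~ None] (counter_row 1) balance_delta.

Lemma counter_moveP q x ds s :
  (exists2 p, p \in [seq (q, add_mx d) | d <- ds] &
     naccepts_from p.1 (counter_row x *m p.2) s)
  <-> exists2 d, d \in ds & naccepts_from (M := balance_nbva) q (counter_row (x + d)) s.
Proof.
split=> [[_ /mapP [d d_ds ->]] | [d d_ds acc]].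
  by rewrite counter_row_add_mx; exists d.
by exists (q, add_mx d); [apply/mapP; exists d | rewrite counter_row_add_mx].
Qed.

Lemma balance_branchP b x w :
  naccepts_from (M := balance_nbva) (Some b) (counter_row x)
    (rcons (map (@Sym bool) w) Dollar) <->
  exists2 n, (n <= count (pred1 b) w)%N & x + balance w = 1 + weight b * n%:R.
Proof.
elim: w x => [|y w IHw] x.
  rewrite /balance /=; split=> [[_ /[!inE] /eqP -> [_]] | [n]].
    by rewrite counter_row_add_mx addr0 first_entry_counter_row => ->; exists 0%N => //; lra.
  rewrite leqn0 => /eqP -> x1; exists (Some b, add_mx 0); rewrite ?inE //.
  by split; rewrite ?inE // counter_row_add_mx first_entry_counter_row; lra.
apply: (iff_trans (counter_moveP _ _ _ (rcons (map (@Sym bool) w) Dollar))).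
rewrite balance_cons; case: eqVneq => [-> | neq_yb]; rewrite [count _ _]/=.
  rewrite eqxx add1n.
  split=> [[d /[!inE] /orP [] /eqP -> /IHw [n le_n e]] | [[|n] le_n e]].
  - by exists n; [exact: leqW | lra].
  - by exists n.+1 => //; rewrite -natr1 mulrDr mulr1; lra.
  - exists (weight b); rewrite ?inE ?eqxx //.
    by apply/(IHw (x + weight b)); exists 0%N => //; lra.
  - exists 0; rewrite ?inE ?eqxx ?orbT //; apply/(IHw (x + 0)); exists n => //.
    by move: e; rewrite -natr1 mulrDr mulr1; lra.
rewrite (negbTE neq_yb) add0n.
split=> [[d /[!inE] /eqP -> /IHw [n le_n e]] | [n le_n e]].
  by exists n => //; lra.
exists (weight y); rewrite ?inE //.
by apply/(IHw (x + weight y)); exists n => //; lra.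
Qed.

Definition unbalanced (w : seq bool) : bool := count id w != count negb w.

Lemma unbalancedP w : unbalanced w <->
  exists b, exists2 n, (n <= count (pred1 b) w)%N & balance w = weight b * n.+1%:R.
Proof.
have gap a c : (a < c)%N -> exists2 n, (n <= c)%N & c%:R - a%:R = n.+1%:R :> rat.
  by move=> lt_ac; exists (c - a.+1)%N; rewrite ?leq_subr // -natr1 natrB // -natr1; lra.
split=> [|[b [n _ bal_n]]].
  rewrite /unbalanced /balance; case: ltngtP => [lt10|lt01|] // _.
  - have [n le_n gap_n] := gap _ _ lt10; exists false, n; last by rewrite -gap_n /=; lra.
    by rewrite (@eq_count _ _ negb) // => -[].
  - have [n le_n gap_n] := gap _ _ lt01; exists true, n; last by rewrite gap_n mul1r.
    by rewrite (@eq_count _ _ id) // => -[].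
rewrite /unbalanced -(eqr_nat rat) -subr_eq0 -/(balance w) bal_n.
by rewrite mulf_eq0 pnatr_eq0 orbF; case: (b).
Qed.

Lemma balance_nbva_accepts w : naccepts balance_nbva w <-> unbalanced w.
Proof.
rewrite nacceptsE unbalancedP; split=> [[_ /mapP [b _ ->]] | [b [n le_n bal_n]]].
  rewrite counter_row_add_mx => /balance_branchP [n le_n e].
  by exists b, n => //; rewrite -natr1 mulrDr mulr1; lra.
exists (Some b, add_mx (- weight b)); first by apply/mapP; exists b => //; case: (b).
rewrite /= counter_row_add_mx; apply/(balance_branchP b (1 - weight b)).
by exists n => //; move: bal_n; rewrite -natr1 mulrDr mulr1; lra.
Qed.

Section DeterministicRun.
Variables (Sigma : Type) (k : nat) (D : rtDBVA Sigma k).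

Fixpoint dtrans (q : dQ D) (s : seq (tape_sym Sigma)) : dQ D * 'M[rat]_k :=
  if s is a :: s' then
    let t := ddelta q a in let r := dtrans t.1 s' in (r.1, t.2 *m r.2)
  else (q, 1%:M).

Lemma foldl_dstep q x s :
  foldl (dstep (M := D)) (q, x) s = ((dtrans q s).1, x *m (dtrans q s).2).
Proof.
elim: s q x => [|a s IHs] q x /=; first by rewrite mulmx1.
by rewrite /dstep IHs mulmxA.
Qed.

Definition dconfig (u : seq Sigma) : dQ D * 'rV[rat]_k :=
  foldl (dstep (M := D)) (dq0 D, dv D) (Cent :: map (@Sym Sigma) u).

Definition dsuffix (q : dQ D) (v : seq Sigma) : dQ D * 'M[rat]_k :=
  dtrans q (rcons (map (@Sym Sigma) v) Dollar).

Lemma drun_cat u v :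
  drun D (u ++ v) =
  ((dsuffix (dconfig u).1 v).1, (dconfig u).2 *m (dsuffix (dconfig u).1 v).2).
Proof.
rewrite /drun /tape map_cat rcons_cat -cat_cons foldl_cat /dsuffix /dconfig.
by case: (foldl _ _ (Cent :: _)) => q x; rewrite foldl_dstep.
Qed.

End DeterministicRun.

Lemma daccepts_cat Sigma k (D : rtDBVA Sigma k.+1) u v :
  let t := dsuffix (dconfig D u).1 v in
  daccepts D (u ++ v) <-> t.1 \in dQa D /\ ((dconfig D u).2 *m t.2) 0 0 = 1.
Proof. by rewrite /daccepts drun_cat first_entry_is_oneE. Qed.

Lemma left_kernel_neq0 (F : fieldType) m n (A : 'M[F]_(m, n)) :
  (n < m)%N -> exists2 v : 'rV_m, v != 0 & v *m A = 0.
Proof.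
move=> lt_nm; have : kermx A != 0.
  rewrite kermx_eq0 /row_free neq_ltn; apply/orP; left.
  exact: leq_ltn_trans (rank_leq_col A) lt_nm.
by case/rowV0Pn => v /sub_kermxP vA0 v_neq0; exists v.
Qed.

Lemma coef_eq0_of_one_defect (F : fieldType) n (mu : 'rV[F]_n) (c : 'I_n -> F) t :
  \sum_s mu 0 s = 0 -> \sum_s mu 0 s * c s = 0 ->
  (forall s, s != t -> c s = 1) -> c t != 1 -> mu 0 t = 0.
Proof.
move=> sum_mu sum_muc c_others ct_neq1.
have : \sum_s mu 0 s * (c s - 1) = 0.
  under eq_bigr => s _ do rewrite mulrBr mulr1.
  by rewrite sumrB sum_muc sum_mu subr0.
rewrite (bigD1 t) //= big1 ?addr0 => [/eqP | s /c_others ->]; last by rewrite subrr mulr0.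
by rewrite mulf_eq0 subr_eq0 (negbTE ct_neq1) orbF => /eqP.
Qed.

(* The rows [u_s] reached after the prefixes [x s] satisfy some nontrivial
   [sum_s mu_s u_s = 0]; as they share the state, every suffix acts on them by
   the same matrix [T], so [sum_s mu_s (u_s T)_00 = 0].  The suffix [z] forces
   [sum_s mu_s = 0], and then the suffix [y t] forces [mu_t = 0]. *)
Lemma dbva_fooling_family Sigma k (D : rtDBVA Sigma k.+1) (x y : 'I_k.+2 -> seq Sigma) z :
  (forall s, (dconfig D (x s)).1 = (dconfig D (x 0)).1) ->
  (forall s, daccepts D (x s ++ z)) ->
  (forall s t, daccepts D (x s ++ y t) <-> s != t) -> False.
Proof.
move=> same_state acc_z acc_y.
pose q := (dconfig D (x 0)).1.
pose U := \matrix_(s < k.+2) (dconfig D (x s)).2.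
have [mu mu_neq0 muU0] := left_kernel_neq0 U (ltnSn k.+1).
pose c v s : rat := ((dconfig D (x s)).2 *m (dsuffix q v).2) 0 0.
have accE s v : daccepts D (x s ++ v) <-> (dsuffix q v).1 \in dQa D /\ c v s = 1.
  by have := daccepts_cat D (x s) v; rewrite /= same_state.
have relation v : \sum_s mu 0 s * c v s = 0.
  have := congr1 (fun A => (A *m (dsuffix q v).2) 0 0) muU0.
  rewrite /= (mulmx_sum_row mu) mulmx_suml summxE mul0mx [RHS]mxE.
  by apply: etrans; apply: eq_bigr => s _; rewrite -scalemxAl [RHS]mxE rowK.
move/eqP: mu_neq0; apply; apply/rowP => t; rewrite mxE.
apply: (coef_eq0_of_one_defect _ (relation (y t))).
- apply: etrans (relation z); apply: eq_bigr => s _.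
  by rewrite (proj2 (proj1 (accE s z) (acc_z s))) mulr1.
- by move=> s neq_st; case/accE: (proj2 (acc_y s t) neq_st).
- have other_acc : lift t ord0 != t by rewrite eq_sym neq_lift.
  have [final_acc _] := proj1 (accE _ _) (proj2 (acc_y _ t) other_acc).
  apply/eqP => ct1; have /acc_y : daccepts D (x t ++ y t) by apply/accE.
  by rewrite eqxx.
Qed.

Lemma exists_injective_fibre (T Q : finType) (g : T -> Q) m :
  (#|Q| * m < #|T|)%N -> exists2 f : 'I_m.+1 -> T, injective f & forall s, g (f s) = g (f 0).
Proof.
move=> card_lt.
have [q big_fibre] : exists q, (m < #|[set i | g i == q]|)%N.
  case: (pickP (fun q => m < #|[set i | g i == q]|)%N) => [q ?|small]; first by exists q.
  move: card_lt; rewrite -[#|T|]sum1_card (partition_big g xpredT) //= -sum_nat_const.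
  rewrite ltnNge leq_sum // => q _; rewrite sum1_card leqNgt.
  by rewrite (@eq_card _ _ [set i | g i == q]) ?small // => i; rewrite inE.
pose f s := enum_val (widen_ord big_fibre s).
have f_q s : g (f s) = q by have := enum_valP (widen_ord big_fibre s); rewrite inE => /eqP.
exists f => [s t /enum_val_inj /(congr1 val) /= /val_inj // | s].
exact: etrans (f_q s) (esym (f_q 0)).
Qed.

Lemma unbalanced_not_dbva k (D : rtDBVA bool k.+1) :
  ~ recognizes (dlang D) (fun w => unbalanced w).
Proof.
move=> recD.
have acc_cat n1 n0 : daccepts D (nseq n1 true ++ nseq n0 false) <-> n1 != n0.
  apply: iff_trans (recD _) _.
  by rewrite /unbalanced !count_cat !count_nseq /= !mul1n !mul0n addn0.
pose g (i : 'I_(#|dQ D| * k.+1).+1) := (dconfig D (nseq i.+1 true)).1.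
have [|f f_inj same_state] := @exists_injective_fibre _ _ g k.+1; first by rewrite card_ord.
apply: (dbva_fooling_family (x := fun s => nseq (f s).+1 true)
          (y := fun t => nseq (f t).+1 false) (z := [::])) => [s|s|s t].
- exact: same_state.
- exact/(acc_cat _ 0).
- by apply: iff_trans (acc_cat _ _) _; rewrite eqSS -[_ == _]/(f s == f t) (inj_eq f_inj).
Qed.

Theorem theorem14 :
  exists (Sigma : finType) (L : seq Sigma -> Prop),
    (exists M : rtNBVA Sigma 2, recognizes (nlang M) L) /\
    (forall k : nat, (1 <= k)%N ->
       forall D : rtDBVA Sigma k, ~ recognizes (dlang D) L).
Proof.
exists bool, (fun w => unbalanced w); split.
  by exists balance_nbva => w; exact: balance_nbva_accepts.
by case=> // k _; exact: unbalanced_not_dbva.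
Qed.
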